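(* Let $q_1,\dots,q_\ell$ be as in the context and let $r_0\in(0,1)$ be such that for all $i,j$ with $\deg q_i>\deg q_j$ and all sufficiently large $N$, $\min_{N^{r_0}\le n,m\le N}\big(q_i(n,N)-q_j(m,N)\big)\ge N$. Then there exist constants $r_1\in(0,1)$, $c>0$, $A,B>0$, sets $B_N\supset[1,N^{r_0}]\cap\mathbb N$ with $|B_N|\le AN^{r_1}$, and, for each permutation $\varepsilon$ of $\{1,\dots,\ell\}$, finitely many numbers $0\le a_{j,\varepsilon}<b_{j,\varepsilon}\le1$ ($j=1,\dots,l_\varepsilon$), with the intervals $(a_{j,\varepsilon},b_{j,\varepsilon})$ pairwise disjoint over all $(j,\varepsilon)$, such that the sets $$I_\varepsilon(N)=\bigcup_{j=1}^{l_\varepsilon}\big(a_{j,\varepsilon}N+BN^{r_1},\,b_{j,\varepsilon}N-N^{r_1}\big)\cap\mathbb N$$ are pairwise disjoint, their union covers $([1,N]\cap\mathbb N)\setminus B_N$, and for all sufficiently large $N$ and all $n\in I_\varepsilon(N)$ with $n\ge N^{r_0}$: $$q_{\varepsilon(1)}(n,N)<q_{\varepsilon(2)}(n,N)<\dots<q_{\varepsilon(\ell)}(n,N),$$ and whenever $q_{\varepsilon(i)}$ and $q_{\varepsilon(i+1)}$ have the same degree and this degree is $>1$, $q_{\varepsilon(i+1)}(n,N)\ge q_{\varepsilon(i)}(n,N)+cN^{1/2}$.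
   Context: $q_1,\dots,q_\ell$ are polynomials in two variables $(n,N)$ with nonnegative integer coefficients, none of which depends only on $N$; the degree of a bivariate polynomial $p(x,y)$ is the degree of $p(x,x)$; $\deg q_i\le\deg q_{i+1}$; for $i\ne j$ the difference $q_i-q_j$ is not constant; each linear $q_i$ has the form $q_i(n,N)=a_in+b_iN$ with integers $a_i,b_i$. *)

From Stdlib Require Import Reals Arith List Permutation.
Open Scope R_scope.

(* A bivariate polynomial in (n, N) with nonnegative integer coefficients,
   given as a finite list of monomials (c, i, j) standing for c * n^i * N^j. *)
Definition bpoly := list (nat * nat * nat).

Definition beval (q : bpoly) (n N : nat) : nat :=
  fold_right (fun m acc => match m with (c, i, j) => (c * n ^ i * N ^ j + acc)%nat end)
             0%nat q.

Definition bcoef (q : bpoly) (i j : nat) : nat :=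
  fold_right (fun m acc => match m with (c, i', j') =>
      if (Nat.eqb i i' && Nat.eqb j j')%bool then (c + acc)%nat else acc end)
    0%nat q.

(* degree of q(x,x): since coefficients are nonnegative there is no
   cancellation, so this is the max of i+j over monomials with c > 0 *)
Definition bdeg (q : bpoly) : nat :=
  fold_right (fun m acc => match m with (c, i, j) =>
      if Nat.eqb c 0 then acc else Nat.max (i + j) acc end) 0%nat q.

Definition depends_only_on_N (q : bpoly) : Prop :=
  forall i j, bcoef q i j <> 0%nat -> i = 0%nat.

Definition diff_constant (q q' : bpoly) : Prop :=
  forall i j, (i, j) <> (0%nat, 0%nat) -> bcoef q i j = bcoef q' i j.

(* p is a permutation of {0,...,l-1}, written as the list [p(0); ...; p(l-1)] *)
Definition is_perm (l : nat) (p : list nat) : Prop := Permutation (seq 0 l) p.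

Definition rpow (N : nat) (r : R) : R := Rpower (INR N) r.

Definition inI (iv : list (R * R)) (B r1 : R) (N n : nat) : Prop :=
  exists ab, In ab iv /\
    fst ab * INR N + B * rpow N r1 < INR n < snd ab * INR N - rpow N r1.

From Stdlib Require Import Reals Arith ZArith List Permutation Sorted Lra Lia Classical ClassicalEpsilon.
Open Scope R_scope.

(** For two polynomials q_a, q_b whose difference D = q_b - q_a is not
    constant, let K >= 1 be the total degree of D and h its top form, a
    univariate polynomial such that D(n, N) = N^K h(n/N) + O(N^(K-1)) for
    0 <= n <= N.  Factoring out the roots of h in [0,1] gives
    |h(t)| >= c dist(t, roots)^L with L bounded by the exponent bound M.
    Choosing r1 < 1 with M (1 - r1) <= 1/4, every n at distance >= N^r1 from
    all r N (r a root) has |h(n/N)| >= c N^(-1/4), hence D(n, N) has the sign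
    of h(n/N) and |D(n, N)| >= sqrt N for large N.

    Call special points 0, 1 and all roots of all top forms.  On each gap
    between consecutive special points every top form has constant sign;
    sorting the values q_a(n, N) at one well separated point produces an
    ordering of the indices that is valid on the whole gap.  The intervals
    attached to an ordering are the gaps carrying it, and the exceptional set
    B_N consists of n <= N^r0 and of the n within N^r1 of some s N, s special;
    it has O(N^r1) elements.  Every remaining n lies in a unique shrunk gap,
    where consecutive polynomials of its ordering are sqrt N apart.  (This
    argument does not need the degree hypotheses of the theorem.) *)

Fixpoint sumR (l : list nat) (f : nat -> R) : R :=
  match l with nil => 0 | a :: l' => f a + sumR l' f end.

Lemma sumR_ext l f g : (forall a, In a l -> f a = g a) -> sumR l f = sumR l g.
Proof. induction l as [|a l IH]; simpl; intros Hfg; auto. rewrite Hfg, IH; auto. Qed.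

Lemma sumR_zero l : sumR l (fun _ => 0) = 0.
Proof. induction l as [|a l IH]; simpl; lra. Qed.

Lemma sumR_plus l f g : sumR l (fun a => f a + g a) = sumR l f + sumR l g.
Proof. induction l as [|a l IH]; simpl; [lra|]. rewrite IH; lra. Qed.

Lemma sumR_scal l c f : sumR l (fun a => c * f a) = c * sumR l f.
Proof. induction l as [|a l IH]; simpl; [lra|]. rewrite IH; lra. Qed.

Lemma sumR_le l f g : (forall a, In a l -> f a <= g a) -> sumR l f <= sumR l g.
Proof.
  induction l as [|a l IH]; simpl; intros Hfg; [lra|].
  pose proof (Hfg a (or_introl eq_refl)). assert (sumR l f <= sumR l g) by auto. lra.
Qed.

Lemma sumR_abs l f : Rabs (sumR l f) <= sumR l (fun a => Rabs (f a)).
Proof.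
  induction l as [|a l IH]; simpl; [rewrite Rabs_R0; lra|].
  eapply Rle_trans; [apply Rabs_triang|lra].
Qed.

Lemma sumR_single l i f : NoDup l -> In i l ->
  sumR l (fun a => if Nat.eqb a i then f a else 0) = f i.
Proof.
  induction l as [|a l IH]; simpl; intros Hl Hi; [contradiction|].
  inversion Hl as [|? ? Hnin Hl']; subst. destruct (Nat.eqb_spec a i) as [->|Hai].
  - rewrite (sumR_ext _ _ (fun _ => 0)), sumR_zero; [lra|].
    intros a Ha. destruct (Nat.eqb_spec a i); congruence.
  - destruct Hi as [->|Hi]; [contradiction|]. rewrite IH; auto; lra.
Qed.

Definition sum2 (M : nat) (F : nat -> nat -> R) : R :=
  sumR (seq 0 M) (fun a => sumR (seq 0 M) (fun b => F a b)).

Lemma sum2_ext M F G : (forall a b, (a < M)%nat -> (b < M)%nat -> F a b = G a b) ->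
  sum2 M F = sum2 M G.
Proof.
  intros HFG. apply sumR_ext; intros a Ha; apply sumR_ext; intros b Hb.
  apply in_seq in Ha, Hb. apply HFG; lia.
Qed.

Lemma sum2_zero M : sum2 M (fun _ _ => 0) = 0.
Proof. unfold sum2. rewrite (sumR_ext _ _ (fun _ => 0)); intros; apply sumR_zero. Qed.

Lemma sum2_plus M F G : sum2 M (fun a b => F a b + G a b) = sum2 M F + sum2 M G.
Proof. unfold sum2. rewrite <- sumR_plus. apply sumR_ext; intros. apply sumR_plus. Qed.

Lemma sum2_scal M c F : sum2 M (fun a b => c * F a b) = c * sum2 M F.
Proof. unfold sum2. rewrite <- sumR_scal. apply sumR_ext; intros. apply sumR_scal. Qed.

Lemma sum2_minus M F G : sum2 M F - sum2 M G = sum2 M (fun a b => F a b - G a b).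
Proof.
  replace (sum2 M F - sum2 M G) with (sum2 M F + -1 * sum2 M G) by ring.
  rewrite <- sum2_scal, <- sum2_plus. apply sum2_ext; intros; ring.
Qed.

Lemma sum2_le M F G : (forall a b, (a < M)%nat -> (b < M)%nat -> F a b <= G a b) ->
  sum2 M F <= sum2 M G.
Proof.
  intros HFG. apply sumR_le; intros a Ha; apply sumR_le; intros b Hb.
  apply in_seq in Ha, Hb. apply HFG; lia.
Qed.

Lemma sum2_abs M F : Rabs (sum2 M F) <= sum2 M (fun a b => Rabs (F a b)).
Proof. eapply Rle_trans; [apply sumR_abs|]. apply sumR_le; intros. apply sumR_abs. Qed.

Lemma sum2_single M i j v : (i < M)%nat -> (j < M)%nat ->
  sum2 M (fun a b => if (Nat.eqb a i && Nat.eqb b j)%bool then v a b else 0) = v i j.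
Proof.
  intros Hi Hj. unfold sum2.
  rewrite sumR_ext with (g := fun a => if Nat.eqb a i
      then sumR (seq 0 M) (fun b => if Nat.eqb b j then v a b else 0) else 0).
  - rewrite !sumR_single; auto using seq_NoDup; apply in_seq; lia.
  - intros a _. destruct (Nat.eqb a i); [reflexivity|apply sumR_zero].
Qed.

Definition exponents_below (M : nat) (q : bpoly) : Prop :=
  forall c i j, In (c, i, j) q -> (i < M)%nat /\ (j < M)%nat.

Lemma exponents_below_cons M m q : exponents_below M (m :: q) -> exponents_below M q.
Proof. intros Hq c i j Hin. apply (Hq c i j); right; exact Hin. Qed.

Lemma beval_grid M q x y : exponents_below M q ->
  INR (beval q x y) = sum2 M (fun a b => INR (bcoef q a b) * INR x ^ a * INR y ^ b).
Proof.
  induction q as [|[[c i] j] q IH]; intros Hq; simpl.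
  - rewrite (sum2_ext _ _ (fun _ _ => 0)) by (intros; simpl; ring). now rewrite sum2_zero.
  - destruct (Hq c i j (or_introl eq_refl)) as [Hi Hj].
    rewrite plus_INR, IH by (eapply exponents_below_cons; eauto).
    rewrite !mult_INR, !pow_INR.
    rewrite <- (sum2_single M i j (fun a b => INR c * INR x ^ a * INR y ^ b)) by auto.
    rewrite <- sum2_plus. apply sum2_ext. intros a b _ _.
    destruct (Nat.eqb a i && Nat.eqb b j)%bool; [rewrite plus_INR|]; ring.
Qed.

Lemma bcoef_nonzero_below M q i j : exponents_below M q -> bcoef q i j <> 0%nat ->
  (i < M)%nat /\ (j < M)%nat.
Proof.
  induction q as [|[[c i'] j'] q IH]; simpl; intros Hq Hc; [lia|].
  destruct (Nat.eqb i i' && Nat.eqb j j')%bool eqn:E.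
  - apply Bool.andb_true_iff in E as [E1 E2]. apply Nat.eqb_eq in E1, E2; subst.
    apply (Hq c); left; auto.
  - apply IH; auto. eapply exponents_below_cons; eauto.
Qed.

Fixpoint horner (e : list R) (t : R) : R :=
  match e with nil => 0 | c :: e' => c + t * horner e' t end.

Lemma horner_as_sum f n : forall s t,
  t ^ s * horner (map f (seq s n)) t = sumR (seq s n) (fun a => f a * t ^ a).
Proof. induction n as [|n IH]; intros s t; simpl; [ring|]. rewrite <- IH. simpl. ring. Qed.

Lemma horner_continuous e : continuity (horner e).
Proof.
  induction e as [|c e IH]; simpl.
  - apply continuity_const. intros x y; reflexivity.
  - apply (continuity_plus (fun _ => c) (fun t => id t * horner e t)).
    + apply continuity_const. intros x y; reflexivity.
    + apply (continuity_mult id (horner e)); auto.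
      apply derivable_continuous, derivable_id.
Qed.

(* A polynomial function vanishing everywhere has only zero coefficients:
   the constant term vanishes, and the quotient by t vanishes off 0, hence
   at 0 by continuity. *)
Lemma horner_zero_coeffs e : (forall t, horner e t = 0) -> forall a, nth a e 0 = 0.
Proof.
  induction e as [|c e IH]; intros Hz a; simpl; [destruct a; reflexivity|].
  assert (Hc : c = 0) by (specialize (Hz 0); simpl in Hz; lra).
  assert (Hoff0 : forall t, t <> 0 -> horner e t = 0).
  { intros t Ht. specialize (Hz t). simpl in Hz. rewrite Hc, Rplus_0_l in Hz.
    apply Rmult_integral in Hz as [|]; [contradiction|auto]. }
  assert (Hat0 : horner e 0 = 0).
  { destruct (Req_dec_T (horner e 0) 0) as [|Hne]; auto. exfalso.
    destruct (horner_continuous e 0 (Rabs (horner e 0)) (Rabs_pos_lt _ Hne)) as [d [Hd Hnear]].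
    specialize (Hnear (d / 2)). simpl in Hnear. unfold R_dist in Hnear.
    rewrite Hoff0, Rminus_0_r, Rminus_0_l, Rabs_Ropp in Hnear by lra.
    assert (Rabs (d / 2) < d) by (rewrite Rabs_pos_eq; lra).
    assert (D_x no_cond 0 (d / 2)) by (split; [exact I|lra]). specialize (Hnear (conj H0 H)). lra. }
  destruct a; [auto|]. apply IH. intros t. destruct (Req_dec_T t 0); subst; auto.
Qed.

Lemma horner_div_linear e r : exists q, length q = pred (length e) /\
  forall t, horner e t = (t - r) * horner q t + horner e r.
Proof.
  induction e as [|c [|c' e'] IH].
  - exists nil. split; auto. intros; simpl; ring.
  - exists nil. split; auto. intros; simpl; ring.
  - destruct IH as [q [Hlen Hq]]. exists (horner (c' :: e') r :: q). split.
    + simpl in *. lia.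
    + intros t. change (horner (c :: c' :: e') t) with (c + t * horner (c' :: e') t).
      change (horner (c :: c' :: e') r) with (c + r * horner (c' :: e') r).
      rewrite (Hq t). simpl. ring.
Qed.

Fixpoint rootprod (rs : list R) (t : R) : R :=
  match rs with nil => 1 | r :: rs' => (t - r) * rootprod rs' t end.

Lemma horner_factor_roots n : forall e, (length e <= n)%nat ->
  (forall t, horner e t = 0) \/
  exists rs g, (length rs <= length e)%nat /\ (forall r, In r rs -> 0 <= r <= 1) /\
    (forall t, 0 <= t <= 1 -> horner g t <> 0) /\
    (forall t, horner e t = rootprod rs t * horner g t).
Proof.
  induction n as [|n IH]; intros e Hlen.
  { destruct e; [left; intros; reflexivity|simpl in Hlen; lia]. }
  destruct (classic (exists r, 0 <= r <= 1 /\ horner e r = 0)) as [[r [Hr Hroot]]|Hnoroot].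
  - destruct (horner_div_linear e r) as [q [Hlq Hq]].
    destruct e as [|c e']; [left; intros; reflexivity|].
    destruct (IH q) as [Hz|[rs [g [Hl [Hrs [Hg Hfac]]]]]]; [simpl in *; lia| |].
    + left. intros t. rewrite Hq, Hz, Hroot. ring.
    + right. exists (r :: rs), g. split; [|split; [|split]]; auto.
      * simpl in *; lia.
      * intros r' [<-|Hin]; auto.
      * intros t. rewrite Hq, Hroot, Hfac. simpl. ring.
  - right. exists nil, e. split; [|split; [|split]]; simpl.
    + lia.
    + contradiction.
    + intros t Ht Hz. apply Hnoroot; eauto.
    + intros; ring.
Qed.

Lemma horner_bounded_below g : (forall t, 0 <= t <= 1 -> horner g t <> 0) ->
  exists gm, 0 < gm /\ forall t, 0 <= t <= 1 -> gm <= Rabs (horner g t).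
Proof.
  intros Hg.
  destruct (continuity_ab_min (fun t => Rabs (horner g t)) 0 1) as [m [Hm Hmin]]; [lra| |].
  - intros c _. apply (continuity_pt_comp (horner g) Rabs).
    + apply horner_continuous.
    + apply Rcontinuity_abs.
  - exists (Rabs (horner g m)). split; auto. apply Rabs_pos_lt. auto.
Qed.

Lemma rootprod_lower rs t eta : 0 <= eta -> (forall r, In r rs -> eta <= Rabs (t - r)) ->
  eta ^ length rs <= Rabs (rootprod rs t).
Proof.
  induction rs as [|r rs IH]; intros Heta Hfar; simpl; [rewrite Rabs_R1; lra|].
  rewrite Rabs_mult. apply Rmult_le_compat; auto using pow_le.
  - apply Hfar; left; auto.
  - apply IH; auto. intros; apply Hfar; right; auto.
Qed.

Lemma rootprod_zero rs t : rootprod rs t = 0 -> In t rs.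
Proof.
  induction rs as [|r rs IH]; simpl; intros Hz; [lra|].
  apply Rmult_integral in Hz as [|]; [left; lra|right; auto].
Qed.

(* Intermediate value theorem: a polynomial positive at [u] stays positive on
   any interval containing [u] and free of its roots. *)
Lemma horner_sign_constant e (Z : list R) s s' u v :
  (forall z, In z Z -> ~ (s < z < s')) ->
  (forall t, s < t < s' -> horner e t = 0 -> In t Z) ->
  s < u < s' -> s < v < s' -> 0 < horner e u -> 0 < horner e v.
Proof.
  intros Hgap Hroots Hu Hv Hpos.
  destruct (Rlt_le_dec 0 (horner e v)) as [|Hle]; auto. exfalso.
  destruct (Rle_lt_or_eq_dec _ _ Hle) as [Hneg|Hzero].
  - destruct (Rlt_le_dec v u) as [Hvu|Huv].
    + destruct (IVT (horner e) v u (horner_continuous e) Hvu Hneg Hpos) as [z [Hz Hz0]].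
      apply (Hgap z); [apply Hroots|]; lra.
    + destruct (Rle_lt_or_eq_dec _ _ Huv) as [Huv'|<-]; [|lra].
      destruct (IVT (fun t => - horner e t) u v) as [z [Hz Hz0]]; try lra.
      * apply continuity_opp, horner_continuous.
      * apply (Hgap z); [apply Hroots|]; lra.
  - apply (Hgap v); [apply Hroots|]; lra.
Qed.

(** Writing n = t N, a polynomial D(n, N) = sum d_ab n^a N^b of total degree
    K equals N^K h(t) + O(N^(K-1)) uniformly for t in [0,1], where
    h(t) = sum_(a+b=K) d_ab t^a is its top form. *)

Definition top_coeffs (M : nat) (d : nat -> nat -> R) (K : nat) : list R :=
  map (fun a => sumR (seq 0 M) (fun b => if Nat.eqb (a + b) K then d a b else 0)) (seq 0 M).

Lemma pow_le1 t a : 0 <= t <= 1 -> 0 <= t ^ a <= 1.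
Proof.
  intros Ht. induction a as [|a IH]; simpl; [lra|]. split.
  - apply Rmult_le_pos; lra.
  - replace 1 with (1 * 1) by ring. apply Rmult_le_compat; lra.
Qed.

(* Each monomial of degree K contributes exactly to the top form, each one of
   lower degree a+b < K is at most |d_ab| y^(K-1) in absolute value. *)
Lemma top_form_approx M (d : nat -> nat -> R) K :
  (forall a b, (a < M)%nat -> (b < M)%nat -> d a b <> 0 -> (a + b <= K)%nat) -> (1 <= K)%nat ->
  forall t y, 0 <= t <= 1 -> 1 <= y ->
  Rabs (sum2 M (fun a b => d a b * (t * y) ^ a * y ^ b) - y ^ K * horner (top_coeffs M d K) t)
  <= sum2 M (fun a b => Rabs (d a b)) * y ^ (K - 1).
Proof.
  intros Hdeg HK t y Ht Hy. unfold top_coeffs.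
  pose proof (horner_as_sum (fun a => sumR (seq 0 M)
    (fun b => if Nat.eqb (a + b) K then d a b else 0)) M 0 t) as Hsum.
  simpl pow in Hsum. rewrite Rmult_1_l in Hsum. rewrite Hsum, <- sumR_scal.
  replace (sumR (seq 0 M) _) with
    (sum2 M (fun a b => t ^ a * y ^ K * (if Nat.eqb (a + b) K then d a b else 0)))
    by (apply sumR_ext; intros a _; rewrite sumR_scal; ring).
  rewrite sum2_minus, (Rmult_comm (sum2 M _)), <- sum2_scal.
  eapply Rle_trans; [apply sum2_abs|]. apply sum2_le. intros a b Ha Hb.
  rewrite Rpow_mult_distr.
  assert (HyK : 0 <= y ^ (K - 1)) by (apply pow_le; lra). pose proof (Rabs_pos (d a b)).
  destruct (Nat.eqb_spec (a + b) K) as [E|E].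
  - rewrite <- E, pow_add.
    replace (_ - _) with 0 by ring. rewrite Rabs_R0. apply Rmult_le_pos; [apply pow_le|]; lra.
  - destruct (Req_dec_T (d a b) 0) as [Hz|Hz].
    + rewrite Hz. replace (_ - _) with 0 by ring. rewrite Rabs_R0. lra.
    + specialize (Hdeg a b Ha Hb Hz).
      replace (_ - _) with (d a b * t ^ a * y ^ (a + b)) by (rewrite pow_add; ring).
      rewrite !Rabs_mult, (Rabs_pos_eq (y ^ (a + b))) by (apply pow_le; lra).
      pose proof (pow_le1 t a Ht). rewrite (Rabs_pos_eq (t ^ a)) by lra.
      assert (y ^ (a + b) <= y ^ (K - 1)) by (apply Rle_pow; [lra|lia]).
      assert (0 <= y ^ (a + b)) by (apply pow_le; lra).
      rewrite Rmult_assoc, Rmult_comm. apply Rmult_le_compat_r; [lra|].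
      rewrite <- (Rmult_1_l (y ^ (K - 1))). apply Rmult_le_compat; lra.
Qed.

Lemma bounded_max (P : nat -> Prop) B : (exists k, P k) -> (forall k, P k -> (k <= B)%nat) ->
  exists K, P K /\ forall k, P k -> (k <= K)%nat.
Proof.
  revert P. induction B as [|B IH]; intros P [k Hk] Hbound.
  - exists k. split; auto. intros k' Hk'. pose proof (Hbound k' Hk'). pose proof (Hbound k Hk). lia.
  - destruct (classic (P (S B))) as [HSB|HSB]; [exists (S B); split; auto|].
    apply IH; eauto. intros k' Hk'. specialize (Hbound k' Hk').
    destruct (Nat.eq_dec k' (S B)); [subst; contradiction|lia].
Qed.

Lemma top_degree_exists M (d : nat -> nat -> R) i0 j0 :
  (i0 < M)%nat -> (j0 < M)%nat -> (i0, j0) <> (0%nat, 0%nat) -> d i0 j0 <> 0 ->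
  exists K a0 b0, (1 <= K)%nat /\ (a0 < M)%nat /\ (b0 < M)%nat /\ (a0 + b0)%nat = K /\ d a0 b0 <> 0 /\
    forall a b, (a < M)%nat -> (b < M)%nat -> d a b <> 0 -> (a + b <= K)%nat.
Proof.
  intros Hi0 Hj0 Hij0 Hd0.
  destruct (bounded_max (fun k => exists a b, (a < M)%nat /\ (b < M)%nat /\
      (a + b)%nat = k /\ d a b <> 0) (M + M)) as [K [[a0 [b0 [Ha0 [Hb0 [HK Hd]]]]] Hmax]].
  - exists (i0 + j0)%nat, i0, j0. tauto.
  - intros k [a [b [? [? [? ?]]]]]. lia.
  - assert (Hsupp : forall a b, (a < M)%nat -> (b < M)%nat -> d a b <> 0 -> (a + b <= K)%nat)
      by (intros a b ? ? ?; apply Hmax; exists a, b; tauto).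
    exists K, a0, b0. repeat split; auto.
    specialize (Hsupp i0 j0 Hi0 Hj0 Hd0). destruct i0, j0; [contradiction|lia|lia|lia].
Qed.

Lemma nth_map_seq (f : nat -> R) n a : (a < n)%nat -> nth a (map f (seq 0 n)) 0 = f a.
Proof.
  intros Ha. rewrite nth_indep with (d' := f 0%nat) by (rewrite length_map, length_seq; lia).
  rewrite map_nth, seq_nth by lia. reflexivity.
Qed.

Lemma top_coeffs_nonzero M (d : nat -> nat -> R) K a0 b0 :
  (a0 < M)%nat -> (b0 < M)%nat -> (a0 + b0)%nat = K -> d a0 b0 <> 0 ->
  nth a0 (top_coeffs M d K) 0 <> 0.
Proof.
  intros Ha0 Hb0 HK Hd. unfold top_coeffs. rewrite nth_map_seq by lia.
  rewrite sumR_ext with (g := fun b => if Nat.eqb b b0 then d a0 b else 0).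
  - rewrite sumR_single; auto using seq_NoDup. apply in_seq; lia.
  - intros b _. destruct (Nat.eqb_spec (a0 + b) K), (Nat.eqb_spec b b0); auto; lia.
Qed.

(** What is extracted from a pair of polynomials: the top form [tf_poly] of
    their difference, its degree and error constant, its roots in [0,1]
    (with multiplicity) and a lower bound in terms of the distance to them. *)
Record TopForm := mkTopForm
  { tf_poly : list R; tf_deg : nat; tf_err : R; tf_roots : list R; tf_lower : R }.

Definition top_form_spec (M : nat) (qa qb : bpoly) (x : TopForm) : Prop :=
  (1 <= tf_deg x)%nat /\ 0 <= tf_err x /\ 0 < tf_lower x /\ (length (tf_roots x) <= M)%nat /\
  (forall n N, (1 <= N)%nat -> (n <= N)%nat ->
     Rabs ((INR (beval qb n N) - INR (beval qa n N))
           - INR N ^ tf_deg x * horner (tf_poly x) (INR n / INR N))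
     <= tf_err x * INR N ^ (tf_deg x - 1)) /\
  (forall t, 0 <= t <= 1 -> horner (tf_poly x) t = 0 -> In t (tf_roots x)) /\
  (forall t eta, 0 <= t <= 1 -> 0 <= eta -> (forall r, In r (tf_roots x) -> eta <= Rabs (t - r)) ->
     tf_lower x * eta ^ length (tf_roots x) <= Rabs (horner (tf_poly x) t)).

Lemma ratio_in_unit n N : (1 <= N)%nat -> (n <= N)%nat -> 0 <= INR n / INR N <= 1.
Proof.
  intros HN Hn. apply le_INR in HN, Hn. simpl in HN. split.
  - apply Rmult_le_pos; [apply pos_INR|left; apply Rinv_0_lt_compat; lra].
  - apply Rmult_le_reg_r with (INR N); [lra|]. unfold Rdiv.
    rewrite Rmult_assoc, Rinv_l, Rmult_1_r, Rmult_1_l by lra. lra.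
Qed.

Lemma top_form_exists M qa qb : exponents_below M qa -> exponents_below M qb ->
  ~ diff_constant qa qb ->
  exists x, top_form_spec M qa qb x /\ forall r, In r (tf_roots x) -> 0 <= r <= 1.
Proof.
  intros Ha Hb Hnc.
  set (d := fun a b => INR (bcoef qb a b) - INR (bcoef qa a b)).
  assert (Hex : exists i j, (i, j) <> (0%nat, 0%nat) /\ bcoef qa i j <> bcoef qb i j).
  { apply NNPP. intros Hn. apply Hnc. intros i j Hij. apply NNPP. intros Hne. apply Hn. eauto. }
  destruct Hex as [i0 [j0 [Hij0 Hne0]]].
  assert (Hbelow : (i0 < M)%nat /\ (j0 < M)%nat).
  { destruct (Nat.eq_dec (bcoef qa i0 j0) 0).
    - apply (bcoef_nonzero_below M qb); auto. lia.
    - apply (bcoef_nonzero_below M qa); auto. }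
  assert (Hd0 : d i0 j0 <> 0) by (unfold d; intros E; apply Hne0, INR_eq; lra).
  destruct (top_degree_exists M d i0 j0) as [K [a0 [b0 [HK [Ha0 [Hb0 [HKa [Hd Hsupp]]]]]]]]; try tauto.
  set (e := top_coeffs M d K).
  destruct (horner_factor_roots (length e) e (le_n _)) as [Hz|[rs [g [Hlr [Hr01 [Hg Hfac]]]]]].
  { exfalso. apply (top_coeffs_nonzero M d K a0 b0); auto. apply horner_zero_coeffs; auto. }
  destruct (horner_bounded_below g Hg) as [gm [Hgm Hgmb]].
  exists (mkTopForm e K (sum2 M (fun a b => Rabs (d a b))) rs gm).
  split; [|exact Hr01]. unfold top_form_spec; simpl.
  split; [auto|]. split.
  { rewrite <- (sum2_zero M). apply sum2_le. intros; apply Rabs_pos. }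
  split; [auto|]. split.
  { unfold e, top_coeffs in Hlr. rewrite length_map, length_seq in Hlr. auto. }
  split; [|split].
  - intros n N HN HnN. pose proof (ratio_in_unit n N HN HnN) as Ht.
    apply le_INR in HN. simpl in HN.
    rewrite (beval_grid M qb), (beval_grid M qa), sum2_minus by auto.
    rewrite (sum2_ext _ _ (fun a b => d a b * (INR n / INR N * INR N) ^ a * INR N ^ b)).
    + apply top_form_approx; auto.
    + intros a b _ _. unfold d. replace (INR n / INR N * INR N) with (INR n) by (field; lra). ring.
  - intros t Ht Hz. rewrite Hfac in Hz. apply Rmult_integral in Hz as [Hz|Hz].
    + apply rootprod_zero; auto.
    + exfalso; apply (Hg t); auto.
  - intros t eta Ht Heta Hfar. rewrite Hfac, Rabs_mult, Rmult_comm.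
    apply Rmult_le_compat; [apply pow_le; auto|lra|apply rootprod_lower; auto|apply Hgmb; auto].
Qed.

Lemma rpow_pos N r : 0 < rpow N r.
Proof. unfold rpow, Rpower. apply exp_pos. Qed.

Lemma rpow_ge1 N r : (1 <= N)%nat -> 0 <= r -> 1 <= rpow N r.
Proof.
  intros HN Hr. unfold rpow. apply le_INR in HN. simpl in HN.
  rewrite <- (Rpower_O (INR N)) by lra. apply Rle_Rpower; auto.
Qed.

Lemma rpow_mono N r r' : (1 <= N)%nat -> r <= r' -> rpow N r <= rpow N r'.
Proof. intros HN Hr. unfold rpow. apply le_INR in HN. simpl in HN. apply Rle_Rpower; auto. Qed.

Lemma rpow_le_N N r : (1 <= N)%nat -> r <= 1 -> rpow N r <= INR N.
Proof.
  intros HN Hr. pose proof (le_INR _ _ HN) as HN'. simpl in HN'.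
  unfold rpow. rewrite <- (Rpower_1 (INR N)) at 2 by lra. apply Rle_Rpower; lra.
Qed.

Lemma nat_large Y : exists N0 : nat, forall N, (N0 <= N)%nat -> Y <= INR N.
Proof.
  exists (Z.to_nat (up (Rabs Y))). intros N HN. apply le_INR in HN.
  destruct (archimed (Rabs Y)) as [H1 H2]. pose proof (Rle_abs Y).
  assert (0 <= up (Rabs Y))%Z by (apply le_IZR; pose proof (Rabs_pos Y); lra).
  rewrite INR_IZR_INZ, Z2Nat.id in HN by auto. lra.
Qed.

Lemma fourth_root y : 0 < y ->
  let w := Rpower y (/ 4) in 0 < w /\ y = w ^ 4 /\ sqrt y = w ^ 2 /\ Rpower y (- / 4) = / w.
Proof.
  intros Hy w. assert (Hw : 0 < w) by (unfold w, Rpower; apply exp_pos).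
  assert (Hpow : forall k : nat, w ^ k = Rpower y (INR k / 4)).
  { intros k. unfold w. rewrite <- Rpower_pow, Rpower_mult by (unfold Rpower; apply exp_pos).
    f_equal. field. }
  split; [auto|split; [|split]].
  - rewrite Hpow. replace (INR 4 / 4) with 1 by (simpl; field). rewrite Rpower_1; auto.
  - rewrite Hpow, <- Rpower_sqrt by auto. f_equal. simpl. field.
  - apply Rpower_Ropp.
Qed.

Lemma top_form_dominates w K C gm h D : (1 <= K)%nat -> 0 <= C -> 0 < gm ->
  1 + (1 + C) / gm <= w -> gm <= w * Rabs h ->
  Rabs (D - (w ^ 4) ^ K * h) <= C * (w ^ 4) ^ (K - 1) ->
  (0 < h -> w ^ 2 <= D) /\ (h <= 0 -> D <= - w ^ 2).
Proof.
  intros HK HC Hgm Hw Hh HD.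
  assert (Hw1 : 1 <= w).
  { assert (0 <= (1 + C) / gm) by (apply Rmult_le_pos; [lra|left; apply Rinv_0_lt_compat; lra]). lra. }
  assert (Hgw : 1 + C + gm <= gm * w).
  { apply Rmult_le_compat_l with (r := gm) in Hw; [|lra].
    replace (gm * (1 + (1 + C) / gm)) with (gm + (1 + C)) in Hw by (field; lra). lra. }
  set (Y := (w ^ 4) ^ (K - 1)) in *.
  assert (HY : 1 <= Y) by (apply pow_R1_Rle, pow_R1_Rle; lra).
  replace ((w ^ 4) ^ K) with (Y * w ^ 4) in HD by (unfold Y; replace K with (S (K - 1)) at 2 by lia; simpl; ring).
  assert (Hbig : w ^ 2 <= Y * w ^ 4 * Rabs h - C * Y).
  { assert (Hw3 : 0 <= w ^ 3) by (apply pow_le; lra).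
    assert (H1 : Y * gm * w ^ 3 <= Y * w ^ 4 * Rabs h).
    { replace (Y * w ^ 4 * Rabs h) with (Y * w ^ 3 * (w * Rabs h)) by ring.
      replace (Y * gm * w ^ 3) with (Y * w ^ 3 * gm) by ring.
      apply Rmult_le_compat_l; auto. apply Rmult_le_pos; lra. }
    assert (H2 : (1 + C) * w ^ 2 <= gm * w ^ 3).
    { replace (gm * w ^ 3) with ((gm * w) * w ^ 2) by ring.
      apply Rmult_le_compat_r; [apply pow_le|]; lra. }
    assert (H3 : 1 <= w ^ 2) by (apply pow_R1_Rle; lra).
    assert (H4 : Y * ((1 + C) * w ^ 2) <= Y * (gm * w ^ 3)) by (apply Rmult_le_compat_l; lra).
    assert (H5 : C <= C * w ^ 2) by nra.
    assert (H6 : (1 + C) * w ^ 2 - C <= Y * ((1 + C) * w ^ 2 - C)).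
    { rewrite <- (Rmult_1_l ((1 + C) * w ^ 2 - C)) at 1. apply Rmult_le_compat_r; lra. }
    lra. }
  pose proof (Rle_abs (D - Y * w ^ 4 * h)) as Hup.
  pose proof (Rle_abs (- (D - Y * w ^ 4 * h))) as Hlow. rewrite Rabs_Ropp in Hlow.
  split; intros Hs; [rewrite Rabs_pos_eq in Hbig|rewrite Rabs_left1 in Hbig]; nra.
Qed.

Lemma distance_power_bound y r1 M L : 1 <= y -> (L <= M)%nat -> r1 < 1 -> INR M * (1 - r1) <= / 4 ->
  Rpower y (- / 4) <= Rpower y (r1 - 1) ^ L.
Proof.
  intros Hy HL Hr HM.
  rewrite <- Rpower_pow, Rpower_mult by (unfold Rpower; apply exp_pos).
  apply Rle_Rpower; auto. apply le_INR in HL. pose proof (pos_INR L). nra.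
Qed.

Lemma distance_rescale y r1 x r : 1 <= y -> Rpower y r1 <= Rabs (x - r * y) ->
  Rpower y (r1 - 1) <= Rabs (x / y - r).
Proof.
  intros Hy Hd. unfold Rminus at 1. rewrite Rpower_plus, Rpower_Ropp, Rpower_1 by lra.
  replace (x / y - r) with ((x - r * y) * / y) by (field; lra).
  rewrite Rabs_mult, (Rabs_pos_eq (/ y)) by (left; apply Rinv_0_lt_compat; lra).
  apply Rmult_le_compat_r; auto. left; apply Rinv_0_lt_compat; lra.
Qed.

Lemma sublinear_eventually d r1 : 0 < d -> r1 < 1 ->
  exists Y, 1 <= Y /\ forall y, Y <= y -> 2 * Rpower y r1 + 2 <= d * y.
Proof.
  intros Hd Hr. set (Y := Rmax (Rmax 1 (4 / d)) (exp (ln (d / 4) / (r1 - 1)))).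
  assert (HY1 : 1 <= Y) by (unfold Y; eapply Rle_trans; [|apply Rmax_l]; apply Rmax_l).
  exists Y. split; auto. intros y Hy.
  assert (Hy4 : 4 / d <= y) by (eapply Rle_trans; [|apply Hy]; unfold Y;
    eapply Rle_trans; [|apply Rmax_l]; apply Rmax_r).
  assert (Hyexp : exp (ln (d / 4) / (r1 - 1)) <= y) by (eapply Rle_trans; [|apply Hy]; apply Rmax_r).
  assert (Hsmall : Rpower y (r1 - 1) <= d / 4).
  { unfold Rpower. rewrite <- (exp_ln (d / 4)) by lra.
    assert (Hl : ln (d / 4) / (r1 - 1) <= ln y).
    { rewrite <- (ln_exp (ln (d / 4) / (r1 - 1))).
      destruct (Rle_lt_or_eq_dec _ _ Hyexp) as [Hlt|Heq]; [left; apply ln_increasing; [apply exp_pos|auto]|rewrite Heq; lra]. }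
    assert (Hm : (r1 - 1) * ln y <= ln (d / 4)).
    { apply Rmult_le_compat_neg_l with (r := r1 - 1) in Hl; [|lra].
      replace ((r1 - 1) * (ln (d / 4) / (r1 - 1))) with (ln (d / 4)) in Hl by (field; lra). lra. }
    destruct (Rle_lt_or_eq_dec _ _ Hm) as [Hlt|Heq]; [left; apply exp_increasing; auto|rewrite Heq; lra]. }
  replace (Rpower y r1) with (y * Rpower y (r1 - 1))
    by (replace r1 with (1 + (r1 - 1)) at 2 by ring; rewrite Rpower_plus, Rpower_1; lra).
  assert (4 <= d * y) by (apply Rmult_le_compat_r with (r := d) in Hy4; [|lra];
    replace (4 / d * d) with 4 in Hy4 by (field; lra); lra).
  assert (y * Rpower y (r1 - 1) <= y * (d / 4)) by (apply Rmult_le_compat_l; lra).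
  lra.
Qed.

Lemma integer_in_interval s s' y r1 : 0 <= s -> s' <= 1 -> 1 <= y ->
  2 * Rpower y r1 + 2 <= (s' - s) * y ->
  exists n : nat, INR n <= y /\ s * y + Rpower y r1 < INR n < s' * y - Rpower y r1.
Proof.
  intros Hs Hs' Hy Hlen. assert (Hp : 0 < Rpower y r1) by (unfold Rpower; apply exp_pos).
  exists (Z.to_nat (up (s * y + Rpower y r1))).
  destruct (archimed (s * y + Rpower y r1)) as [A1 A2].
  assert (0 <= up (s * y + Rpower y r1))%Z by (apply le_IZR; nra).
  rewrite INR_IZR_INZ, Z2Nat.id by auto. nra.
Qed.

Fixpoint insert_by (v : nat -> R) (x : nat) (p : list nat) : list nat :=
  match p with
  | nil => x :: nil
  | y :: p' => if Rlt_dec (v x) (v y) then x :: y :: p' else y :: insert_by v x p'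
  end.

Lemma insert_by_perm v x p : Permutation (x :: p) (insert_by v x p).
Proof.
  induction p as [|y p IH]; simpl; auto. destruct (Rlt_dec (v x) (v y)); auto.
  eapply perm_trans; [apply perm_swap|auto].
Qed.

Lemma insert_by_sorted v x p : Sorted (fun a b => v a < v b) p ->
  (forall y, In y p -> v x <> v y) -> Sorted (fun a b => v a < v b) (insert_by v x p).
Proof.
  induction p as [|y p IH]; simpl; intros Hs Hdist; [auto|].
  apply Sorted_inv in Hs as [Hs Hhd]. destruct (Rlt_dec (v x) (v y)) as [Hlt|Hge].
  - repeat constructor; auto.
  - constructor; [apply IH; auto|].
    assert (v x <> v y) by auto.
    destruct p as [|z p]; simpl; [constructor; lra|].
    destruct (Rlt_dec (v x) (v z)); constructor; [lra|inversion Hhd; auto].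
Qed.

Lemma sort_by_key (v : nat -> R) s : NoDup s ->
  (forall a b, In a s -> In b s -> a <> b -> v a <> v b) ->
  exists p, Permutation s p /\ Sorted (fun a b => v a < v b) p.
Proof.
  induction s as [|x s IH]; intros Hnd Hdist; [exists nil; auto|].
  inversion Hnd as [|? ? Hnin Hnd']; subst.
  destruct IH as [p [Hp Hs]]; auto; [intros; apply Hdist; simpl; auto|].
  exists (insert_by v x p). split.
  - eapply perm_trans; [apply perm_skip, Hp|apply insert_by_perm].
  - apply insert_by_sorted; auto. intros y Hy. apply Hdist; simpl; auto.
    + right. apply Permutation_in with p; auto. apply Permutation_sym; auto.
    + intros ->. apply Hnin. apply Permutation_in with p; auto. apply Permutation_sym; auto.
Qed.

Lemma sorted_adjacent (Rl : nat -> nat -> Prop) p : Sorted Rl p ->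
  forall i, (S i < length p)%nat -> Rl (nth i p 0%nat) (nth (S i) p 0%nat).
Proof.
  induction p as [|a p IH]; simpl; intros Hs i Hi; [lia|].
  apply Sorted_inv in Hs as [Hs Hhd]. destruct i as [|i].
  - destruct p; [simpl in Hi; lia|]. inversion Hhd; auto.
  - apply IH; auto. lia.
Qed.

Lemma perm_length l p : is_perm l p -> length p = l.
Proof. intros Hp. rewrite <- (Permutation_length Hp), length_seq; auto. Qed.

Lemma perm_adjacent l p i : is_perm l p -> (S i < l)%nat ->
  (nth i p 0%nat < l)%nat /\ (nth (S i) p 0%nat < l)%nat /\ nth i p 0%nat <> nth (S i) p 0%nat.
Proof.
  intros Hp Hi. pose proof (perm_length l p Hp) as Hlen.
  assert (Hrange : forall k, (k < l)%nat -> (nth k p 0%nat < l)%nat).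
  { intros k Hk. assert (Hin : In (nth k p 0%nat) (seq 0 l)).
    { apply Permutation_in with p; [apply Permutation_sym; auto|apply nth_In; lia]. }
    apply in_seq in Hin. lia. }
  split; [apply Hrange; lia|split; [apply Hrange; lia|]].
  intros E. apply (NoDup_nth p 0%nat) in E; [lia| |lia|lia].
  apply (Permutation_NoDup Hp), seq_NoDup.
Qed.

Lemma eventually_all_below (P : nat -> nat -> Prop) l :
  (forall a, (a < l)%nat -> exists N0, forall N, (N0 <= N)%nat -> P a N) ->
  exists N0, forall a, (a < l)%nat -> forall N, (N0 <= N)%nat -> P a N.
Proof.
  induction l as [|l IH]; intros Hev; [exists 0%nat; intros; lia|].
  destruct IH as [N1 HN1]; [intros; apply Hev; lia|].
  destruct (Hev l) as [N2 HN2]; [lia|].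
  exists (Nat.max N1 N2). intros a Ha N HN.
  destruct (Nat.eq_dec a l); [subst; apply HN2; lia|apply HN1; lia].
Qed.

Lemma list_max_such_that (Z : list R) (P : R -> Prop) : (exists z, In z Z /\ P z) ->
  exists m, In m Z /\ P m /\ forall z, In z Z -> P z -> z <= m.
Proof.
  induction Z as [|a Z IH]; intros [z [Hz Pz]]; [destruct Hz|].
  destruct (classic (exists z, In z Z /\ P z)) as [Hex|Hno].
  - destruct (IH Hex) as [m [Hm [Pm Hmax]]].
    destruct (classic (P a /\ m <= a)) as [[Pa Ha]|Hna].
    + exists a. split; [left; auto|split; auto].
      intros z' [<-|Hz'] Pz'; [lra|specialize (Hmax z' Hz' Pz'); lra].
    + exists m. split; [right; auto|split; auto]. intros z' [<-|Hz'] Pz'; auto.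
      apply Rnot_lt_le. intros Hlt. apply Hna. split; auto; lra.
  - destruct Hz as [<-|Hz]; [|exfalso; apply Hno; eauto].
    exists a. split; [left; auto|split; auto].
    intros z' [<-|Hz'] Pz'; [lra|exfalso; apply Hno; eauto].
Qed.

Lemma list_min_such_that (Z : list R) (P : R -> Prop) : (exists z, In z Z /\ P z) ->
  exists m, In m Z /\ P m /\ forall z, In z Z -> P z -> m <= z.
Proof.
  intros [z [Hz Pz]].
  destruct (list_max_such_that (map Ropp Z) (fun z => P (- z))) as [m [Hm [Pm Hmax]]].
  - exists (- z). split; [apply in_map; auto|rewrite Ropp_involutive; auto].
  - apply in_map_iff in Hm as [m' [<- Hm']]. rewrite Ropp_involutive in Pm.
    exists m'. split; [auto|split; auto]. intros z' Hz' Pz'.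
    assert (- z' <= - m'); [apply Hmax; [apply in_map|rewrite Ropp_involutive]; auto|lra].
Qed.

Lemma gaps_meet_equal (Z : list R) s1 s1' s2 s2' x :
  In s1 Z -> In s1' Z -> In s2 Z -> In s2' Z ->
  (forall z, In z Z -> ~ (s1 < z < s1')) -> (forall z, In z Z -> ~ (s2 < z < s2')) ->
  s1 < x < s1' -> s2 < x < s2' -> s1 = s2 /\ s1' = s2'.
Proof.
  intros A1 A2 A3 A4 N1 N2 X1 X2.
  destruct (Rtotal_order s1 s2) as [Hl|[He|Hg]].
  - exfalso; apply (N1 s2); auto; lra.
  - split; auto. destruct (Rtotal_order s1' s2') as [Hl|[He'|Hg]]; auto.
    + exfalso; apply (N2 s1'); auto; lra.
    + exfalso; apply (N1 s2'); auto; lra.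
  - exfalso; apply (N2 s1); auto; lra.
Qed.

(* The integers within distance W of a real x lie in a run of length 2W + 2. *)
Definition integers_near (x W : R) : list nat :=
  seq (Z.to_nat (up (x - W) - 1)) (Z.to_nat (up (2 * W)) + 1).

Lemma integers_near_spec x W n : 0 < W -> Rabs (INR n - x) <= W -> In n (integers_near x W).
Proof.
  intros HW Hn. pose proof (Rle_abs (INR n - x)). pose proof (Rle_abs (- (INR n - x))).
  rewrite Rabs_Ropp in *. unfold integers_near. apply in_seq.
  destruct (archimed (x - W)) as [A1 A2]. destruct (archimed (2 * W)) as [B1 B2].
  assert (E1 : (up (x - W) - 1 <= Z.of_nat n)%Z).
  { apply le_IZR. rewrite minus_IZR, <- INR_IZR_INZ. lra. }
  assert (E2 : (Z.of_nat n - (up (x - W) - 1) < up (2 * W) + 1)%Z).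
  { apply lt_IZR. rewrite !minus_IZR, plus_IZR, <- INR_IZR_INZ. lra. }
  assert (E3 : (0 < up (2 * W))%Z) by (apply lt_IZR; lra).
  lia.
Qed.

Lemma length_flat_map_const {A B : Type} (f : A -> list B) k l :
  (forall x, length (f x) = k) -> length (flat_map f l) = (length l * k)%nat.
Proof. intros Hf. induction l as [|x l IH]; simpl; auto. rewrite length_app, Hf, IH. lia. Qed.

Lemma INR_Z_to_nat z : (0 <= z)%Z -> INR (Z.to_nat z) = IZR z.
Proof. intros. rewrite INR_IZR_INZ, Z2Nat.id; auto. Qed.

Lemma count_near_points (l : list nat) (X W : R) (xs : list R) :
  NoDup l -> 0 <= X -> 1 <= W ->
  (forall n, In n l -> (1 <= n)%nat /\ INR n <= X \/ exists x, In x xs /\ Rabs (INR n - x) <= W) ->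
  INR (length l) <= X + 1 + 4 * W * INR (length xs).
Proof.
  intros Hnd HX HW Hl.
  set (cover := seq 1 (Z.to_nat (up X)) ++ flat_map (fun x => integers_near x W) xs).
  assert (Hincl : incl l cover).
  { intros n Hn. destruct (Hl n Hn) as [[Hn1 HnX]|[x [Hx Hnx]]]; apply in_or_app.
    - left. apply in_seq. destruct (archimed X) as [A1 A2].
      assert (Z.of_nat n < up X)%Z by (apply lt_IZR; rewrite <- INR_IZR_INZ; lra). lia.
    - right. apply in_flat_map. exists x. split; auto. apply integers_near_spec; auto; lra. }
  apply NoDup_incl_length in Hincl; auto. apply le_INR in Hincl.
  eapply Rle_trans; [apply Hincl|].
  unfold cover. rewrite length_app, length_seq,
    (length_flat_map_const _ (Z.to_nat (up (2 * W)) + 1)) by (intros; apply length_seq).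
  rewrite plus_INR, mult_INR, plus_INR.
  destruct (archimed X) as [A1 A2]. destruct (archimed (2 * W)) as [B1 B2].
  rewrite !INR_Z_to_nat by (apply le_IZR; lra). simpl (INR 1).
  pose proof (pos_INR (length xs)).
  assert (INR (length xs) * (IZR (up (2 * W)) + 1) <= INR (length xs) * (4 * W))
    by (apply Rmult_le_compat_l; lra).
  lra.
Qed.

Definition separated_at (qa qb : bpoly) (x : TopForm) (r1 : R) (N : nat) : Prop :=
  forall n, (n <= N)%nat ->
  (forall r, In r (tf_roots x) -> rpow N r1 <= Rabs (INR n - r * INR N)) ->
  (0 < horner (tf_poly x) (INR n / INR N) ->
     sqrt (INR N) <= INR (beval qb n N) - INR (beval qa n N)) /\
  (horner (tf_poly x) (INR n / INR N) <= 0 ->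
     INR (beval qb n N) - INR (beval qa n N) <= - sqrt (INR N)).

Lemma top_form_separates M qa qb x r1 : top_form_spec M qa qb x ->
  r1 < 1 -> INR M * (1 - r1) <= / 4 ->
  exists N0, forall N, (N0 <= N)%nat -> separated_at qa qb x r1 N.
Proof.
  intros [HK [HC [Hgm [HL [Happrox [_ Hlower]]]]]] Hr1 HM.
  set (W := 1 + (1 + tf_err x) / tf_lower x).
  assert (HW : 1 <= W).
  { assert (0 <= (1 + tf_err x) / tf_lower x)
      by (apply Rmult_le_pos; [lra|left; apply Rinv_0_lt_compat; lra]). unfold W; lra. }
  destruct (nat_large (Rmax 1 (W ^ 4))) as [N0 HN0].
  exists N0. intros N HN n HnN Hfar.
  pose proof (HN0 N HN) as HNW. pose proof (Rmax_l 1 (W ^ 4)). pose proof (Rmax_r 1 (W ^ 4)).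
  assert (Hy : 1 <= INR N) by lra.
  assert (HN1 : (1 <= N)%nat) by (apply INR_le; simpl; lra).
  destruct (fourth_root (INR N)) as [Hw [Hy4 [Hsqrt Hinv]]]; [lra|].
  set (w := Rpower (INR N) (/ 4)) in *.
  assert (HWw : W <= w).
  { unfold w. replace W with (Rpower (W ^ 4) (/ 4)).
    - apply Rle_Rpower_l; [lra|split; [apply pow_lt; lra|lra]].
    - rewrite <- (Rpower_pow 4 W), Rpower_mult by lra. replace (INR 4 * / 4) with 1 by (simpl; field).
      apply Rpower_1; lra. }
  assert (Hh : tf_lower x <= w * Rabs (horner (tf_poly x) (INR n / INR N))).
  { assert (Hbound : tf_lower x * / w <= Rabs (horner (tf_poly x) (INR n / INR N))).
    { eapply Rle_trans; [|apply (Hlower _ (Rpower (INR N) (r1 - 1)))].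
      - apply Rmult_le_compat_l; [lra|]. rewrite <- Hinv.
        apply (distance_power_bound _ _ M); auto.
      - apply ratio_in_unit; auto.
      - left; unfold Rpower; apply exp_pos.
      - intros r Hr. apply distance_rescale, Hfar; auto. }
    apply Rmult_le_compat_l with (r := w) in Hbound; [|lra].
    replace (w * (tf_lower x * / w)) with (tf_lower x) in Hbound by (field; lra). exact Hbound. }
  rewrite Hsqrt. apply (top_form_dominates w (tf_deg x) (tf_err x) (tf_lower x)); auto.
  rewrite <- Hy4. apply Happrox; auto.
Qed.

Section Construction.

Variable qs : list bpoly.

Hypothesis qs_nonconstant_differences : forall i j, (i < length qs)%nat -> (j < length qs)%nat ->
  i <> j -> ~ diff_constant (nth i qs nil) (nth j qs nil).

Definition max_exponent (q : bpoly) : nat :=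
  fold_right (fun m acc => match m with (c, i, j) => Nat.max (Nat.max i j) acc end) 0%nat q.

Definition exponent_bound : nat := S (fold_right Nat.max 0%nat (map max_exponent qs)).

Lemma exponent_bound_spec a : (a < length qs)%nat -> exponents_below exponent_bound (nth a qs nil).
Proof.
  intros Ha c i j Hin. unfold exponent_bound.
  assert (Hq : (Nat.max i j <= max_exponent (nth a qs nil))%nat).
  { induction (nth a qs nil) as [|[[c' i'] j'] q IH]; simpl in *; [contradiction|].
    destruct Hin as [E|Hin]; [inversion E; subst; lia|specialize (IH Hin); lia]. }
  assert (Hall : forall q, In q qs ->
      (max_exponent q <= fold_right Nat.max 0%nat (map max_exponent qs))%nat).
  { clear. induction qs as [|q' qs' IH]; simpl; intros q Hin; [contradiction|].
    destruct Hin as [<-|Hin]; [lia|specialize (IH q Hin); lia]. }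
  specialize (Hall _ (nth_In qs nil Ha)).
  lia.
Qed.

Definition top_form_valid (a b : nat) (x : TopForm) : Prop :=
  (forall r, In r (tf_roots x) -> 0 <= r <= 1) /\
  ((a < length qs)%nat -> (b < length qs)%nat -> a <> b ->
     top_form_spec exponent_bound (nth a qs nil) (nth b qs nil) x).

Definition top_form (a b : nat) : TopForm :=
  epsilon (inhabits (mkTopForm nil 0 0 nil 0)) (top_form_valid a b).

Lemma top_form_correct a b : top_form_valid a b (top_form a b).
Proof.
  unfold top_form. apply epsilon_spec.
  destruct (classic ((a < length qs)%nat /\ (b < length qs)%nat /\ a <> b)) as [[Ha [Hb Hab]]|Hno].
  - destruct (top_form_exists exponent_bound (nth a qs nil) (nth b qs nil)) as [x [Hx Hroots]];
      auto using exponent_bound_spec.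
    exists x. split; auto.
  - exists (mkTopForm nil 0 0 nil 0). split; [simpl; tauto|intros; exfalso; auto].
Qed.

Lemma top_form_roots_unit a b r : In r (tf_roots (top_form a b)) -> 0 <= r <= 1.
Proof. apply (proj1 (top_form_correct a b)). Qed.

Lemma top_form_spec_pair a b : (a < length qs)%nat -> (b < length qs)%nat -> a <> b ->
  top_form_spec exponent_bound (nth a qs nil) (nth b qs nil) (top_form a b).
Proof. apply (proj2 (top_form_correct a b)). Qed.

Definition special_points : list R :=
  nodup Req_dec_T (0 :: 1 :: flat_map (fun a => flat_map (fun b => tf_roots (top_form a b))
    (seq 0 (length qs))) (seq 0 (length qs))).

Lemma special_points_unit z : In z special_points -> 0 <= z <= 1.
Proof.
  unfold special_points. rewrite nodup_In. intros [<-|[<-|Hz]]; try lra.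
  apply in_flat_map in Hz as [a [_ Hz]]. apply in_flat_map in Hz as [b [_ Hz]].
  eapply top_form_roots_unit; eauto.
Qed.

Lemma special_point_0 : In 0 special_points.
Proof. unfold special_points. apply nodup_In. simpl; auto. Qed.

Lemma special_point_1 : In 1 special_points.
Proof. unfold special_points. apply nodup_In. simpl; auto. Qed.

Lemma special_point_root a b r : (a < length qs)%nat -> (b < length qs)%nat ->
  In r (tf_roots (top_form a b)) -> In r special_points.
Proof.
  intros Ha Hb Hr. unfold special_points. apply nodup_In. right; right.
  apply in_flat_map. exists a. split; [apply in_seq; lia|].
  apply in_flat_map. exists b. split; [apply in_seq; lia|auto].
Qed.

Definition is_gap (g : R * R) : Prop :=
  fst g < snd g /\ forall z, In z special_points -> ~ (fst g < z < snd g).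

Definition pair_eq_dec (x y : R * R) : {x = y} + {x <> y}.
Proof. decide equality; apply Req_dec_T. Defined.

Definition gaps : list (R * R) :=
  nodup pair_eq_dec (filter (fun g => if excluded_middle_informative (is_gap g) then true else false)
    (list_prod special_points special_points)).

Lemma gaps_iff g : In g gaps <-> In (fst g) special_points /\ In (snd g) special_points /\ is_gap g.
Proof.
  destruct g as [s s']. unfold gaps. rewrite nodup_In, filter_In, in_prod_iff. simpl.
  destruct (excluded_middle_informative (is_gap (s, s'))); intuition discriminate.
Qed.

Lemma gap_in_unit s s' : In (s, s') gaps -> 0 <= s /\ s < s' /\ s' <= 1.
Proof.
  intros Hg. apply gaps_iff in Hg as [Hs [Hs' [Hlt _]]]. simpl in *.
  apply special_points_unit in Hs, Hs'. lra.
Qed.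

Lemma gap_far_from_special r1 s s' N n : In (s, s') gaps ->
  s * INR N + rpow N r1 < INR n < s' * INR N - rpow N r1 ->
  forall z, In z special_points -> rpow N r1 <= Rabs (INR n - z * INR N).
Proof.
  intros Hg Hn z Hz. apply gaps_iff in Hg as [_ [_ [_ Hno]]]. simpl in Hno.
  pose proof (pos_INR N). pose proof (rpow_pos N r1).
  destruct (Rle_lt_dec z s) as [Hzs|Hzs].
  - assert (z * INR N <= s * INR N) by (apply Rmult_le_compat_r; lra).
    rewrite Rabs_pos_eq; lra.
  - destruct (Rle_lt_dec s' z) as [Hzs'|Hzs'].
    + assert (s' * INR N <= z * INR N) by (apply Rmult_le_compat_r; lra).
      rewrite Rabs_left1; lra.
    + exfalso. apply (Hno z Hz). lra.
Qed.

Lemma top_form_sign_on_gap a b s s' u v : (a < length qs)%nat -> (b < length qs)%nat -> a <> b ->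
  In (s, s') gaps -> s < u < s' -> s < v < s' ->
  0 < horner (tf_poly (top_form a b)) u -> 0 < horner (tf_poly (top_form a b)) v.
Proof.
  intros Ha Hb Hab Hg Hu Hv Hpos. pose proof (gap_in_unit s s' Hg) as Hunit.
  apply gaps_iff in Hg as [_ [_ [_ Hno]]]. simpl in Hno.
  apply (horner_sign_constant _ special_points s s' u); auto.
  intros t Ht Hz. destruct (top_form_spec_pair a b Ha Hb Hab) as [_ [_ [_ [_ [_ [Hroots _]]]]]].
  apply (special_point_root a b); auto. apply Hroots; auto. lra.
Qed.

(* Exponents r1 with [sep_exponent] <= r1 < 1 make a product of at most
   [exponent_bound] distances N^(r1-1) at least N^(-1/4). *)
Definition sep_exponent : R := 1 - / (4 * (INR exponent_bound + 1)).

Lemma sep_exponent_props r1 : sep_exponent <= r1 ->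
  0 < sep_exponent < 1 /\ INR exponent_bound * (1 - r1) <= / 4.
Proof.
  unfold sep_exponent. intros Hr1. set (m := INR exponent_bound) in *.
  assert (0 <= m) by apply pos_INR.
  assert (Hinv : / (4 * (m + 1)) <= / 4) by (apply Rinv_le_contravar; lra).
  assert (0 < / (4 * (m + 1))) by (apply Rinv_0_lt_compat; lra).
  assert (Hm : m * / (4 * (m + 1)) <= / 4).
  { apply Rmult_le_reg_r with (4 * (m + 1)); [lra|].
    replace (m * / (4 * (m + 1)) * (4 * (m + 1))) with m by (field; lra).
    replace (/ 4 * (4 * (m + 1))) with (m + 1) by field. lra. }
  split; [lra|]. assert (1 - r1 <= / (4 * (m + 1))) by lra.
  destruct (Rle_lt_dec 0 (1 - r1)); [|nra].
  eapply Rle_trans; [|apply Hm]. apply Rmult_le_compat_l; lra.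
Qed.

Definition separated_pair (r1 : R) (a b N : nat) : Prop :=
  separated_at (nth a qs nil) (nth b qs nil) (top_form a b) r1 N.

Lemma all_pairs_separated r1 : sep_exponent <= r1 < 1 ->
  exists N0, forall a, (a < length qs)%nat -> forall N, (N0 <= N)%nat ->
  forall b, (b < length qs)%nat -> a <> b -> separated_pair r1 a b N.
Proof.
  intros Hr1. destruct (sep_exponent_props r1) as [_ HM]; [lra|].
  apply (eventually_all_below (fun a N => forall b, (b < length qs)%nat -> a <> b ->
    separated_pair r1 a b N)).
  intros a Ha.
  destruct (eventually_all_below (fun b N => a <> b -> separated_pair r1 a b N) (length qs))
    as [N0 HN0].
  - intros b Hb. destruct (Nat.eq_dec a b) as [->|Hab]; [exists 0%nat; intros; contradiction|].
    destruct (top_form_separates exponent_bound (nth a qs nil) (nth b qs nil) (top_form a b) r1)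
      as [N0 HN0]; auto using top_form_spec_pair; try lra.
    exists N0; intros N HN _; apply HN0; auto.
  - exists N0. intros N HN b Hb Hab. apply HN0; auto.
Qed.

Definition orders_gap (g : R * R) (p : list nat) : Prop :=
  forall i, (S i < length qs)%nat ->
    0 < horner (tf_poly (top_form (nth i p 0%nat) (nth (S i) p 0%nat))) ((fst g + snd g) / 2).

(* At a separated point the values q_a(n,N) are pairwise sqrt N apart;
   listing the indices by increasing value makes all consecutive top forms
   positive at n/N. *)
Lemma sorted_order_at r1 N n : (1 <= N)%nat -> (n <= N)%nat ->
  (forall a b, (a < length qs)%nat -> (b < length qs)%nat -> a <> b -> separated_pair r1 a b N) ->
  (forall z, In z special_points -> rpow N r1 <= Rabs (INR n - z * INR N)) ->
  exists p, is_perm (length qs) p /\ forall i, (S i < length qs)%nat ->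
    0 < horner (tf_poly (top_form (nth i p 0%nat) (nth (S i) p 0%nat))) (INR n / INR N).
Proof.
  intros HN HnN Hsep Hfar.
  assert (Hsq : 0 < sqrt (INR N)) by (apply sqrt_lt_R0, lt_0_INR; lia).
  set (v := fun a => INR (beval (nth a qs nil) n N)).
  assert (Hsign : forall a b, (a < length qs)%nat -> (b < length qs)%nat -> a <> b ->
     (0 < horner (tf_poly (top_form a b)) (INR n / INR N) -> sqrt (INR N) <= v b - v a) /\
     (horner (tf_poly (top_form a b)) (INR n / INR N) <= 0 -> v b - v a <= - sqrt (INR N))).
  { intros a b Ha Hb Hab. apply Hsep; auto.
    intros r Hr. apply Hfar, (special_point_root a b); auto. }
  destruct (sort_by_key v (seq 0 (length qs))) as [p [Hp Hsorted]].
  - apply seq_NoDup.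
  - intros a b Ha Hb Hab. apply in_seq in Ha, Hb.
    destruct (Hsign a b) as [Hpos Hneg]; try lia; auto.
    destruct (Rlt_le_dec 0 (horner (tf_poly (top_form a b)) (INR n / INR N))) as [H|H];
      [specialize (Hpos H)|specialize (Hneg H)]; lra.
  - exists p. split; auto. intros i Hi.
    destruct (perm_adjacent _ p i Hp Hi) as [Ha [Hb Hab]].
    pose proof (sorted_adjacent _ p Hsorted i) as Hvi. rewrite (perm_length _ p Hp) in Hvi.
    specialize (Hvi Hi). simpl in Hvi.
    destruct (Hsign _ _ Ha Hb Hab) as [_ Hneg].
    destruct (Rlt_le_dec 0 (horner (tf_poly (top_form (nth i p 0%nat) (nth (S i) p 0%nat)))
      (INR n / INR N))) as [H|H]; auto.
    specialize (Hneg H). unfold v in *. lra.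
Qed.

Lemma div_between s s' N n : (1 <= N)%nat -> s * INR N < INR n < s' * INR N -> s < INR n / INR N < s'.
Proof.
  intros HN Hn. apply le_INR in HN. simpl in HN.
  split; apply Rmult_lt_reg_r with (INR N); try lra;
    unfold Rdiv; rewrite Rmult_assoc, Rinv_l, Rmult_1_r by lra; lra.
Qed.

(* Every gap has an ordering: test it at one separated point inside the gap
   for a large N, and move the signs to the midpoint. *)
Lemma gap_has_order g : In g gaps -> exists p, is_perm (length qs) p /\ orders_gap g p.
Proof.
  intros Hg. destruct g as [s s']. pose proof (gap_in_unit s s' Hg) as [Hs [Hlt Hs']].
  destruct (sep_exponent_props sep_exponent (Rle_refl _)) as [Hr1 _].
  destruct (all_pairs_separated sep_exponent) as [N0 HN0]; [lra|].
  destruct (sublinear_eventually (s' - s) sep_exponent) as [Y [HY1 HY]]; try lra.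
  destruct (nat_large Y) as [N1 HN1].
  set (N := Nat.max (Nat.max N0 N1) 1).
  assert (HYN : Y <= INR N) by (apply HN1; lia).
  destruct (integer_in_interval s s' (INR N) sep_exponent) as [n [HnN Hn]]; try lra; [apply HY; auto|].
  assert (Hfar : forall z, In z special_points -> rpow N sep_exponent <= Rabs (INR n - z * INR N))
    by (apply (gap_far_from_special sep_exponent s s'); auto).
  destruct (sorted_order_at sep_exponent N n) as [p [Hp Hpos]]; try lia.
  - apply INR_le; auto.
  - intros a b Ha Hb Hab. apply HN0; auto. lia.
  - exact Hfar.
  - exists p. split; auto. intros i Hi. simpl.
    destruct (perm_adjacent _ p i Hp Hi) as [Ha [Hb Hab]].
    apply (top_form_sign_on_gap _ _ s s' (INR n / INR N)); auto; try lra.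
    apply div_between; [lia|]. pose proof (rpow_pos N sep_exponent). unfold rpow in *. lra.
Qed.

(* A chosen ordering of each gap (an arbitrary list for non-gaps). *)
Definition gap_order (g : R * R) : list nat :=
  epsilon (inhabits nil) (fun p => is_perm (length qs) p /\ orders_gap g p).

Lemma gap_order_spec g : In g gaps -> is_perm (length qs) (gap_order g) /\ orders_gap g (gap_order g).
Proof. intros Hg. unfold gap_order. apply epsilon_spec, gap_has_order, Hg. Qed.

(* The intervals (a_j, b_j) attached to the ordering p: the gaps ordered by p. *)
Definition order_intervals (p : list nat) : list (R * R) :=
  filter (fun g => if list_eq_dec Nat.eq_dec (gap_order g) p then true else false) gaps.

Lemma order_intervals_iff p g : In g (order_intervals p) <-> In g gaps /\ gap_order g = p.
Proof.
  unfold order_intervals. rewrite filter_In.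
  destruct (list_eq_dec Nat.eq_dec (gap_order g) p); intuition discriminate.
Qed.

Definition exceptional_set (r0 r1 : R) (N : nat) : list nat :=
  filter (fun n => if excluded_middle_informative (INR n <= rpow N r0 \/
     exists s, In s special_points /\ Rabs (INR n - s * INR N) <= rpow N r1)
     then true else false) (seq 1 N).

Lemma in_exceptional_set r0 r1 N n : (1 <= n <= N)%nat ->
  (INR n <= rpow N r0 \/ exists s, In s special_points /\ Rabs (INR n - s * INR N) <= rpow N r1) ->
  In n (exceptional_set r0 r1 N).
Proof.
  intros Hn Hcond. unfold exceptional_set. apply filter_In. split; [apply in_seq; lia|].
  destruct (excluded_middle_informative _); tauto.
Qed.

Lemma exceptional_set_props r0 r1 N : 0 <= r0 <= r1 -> r0 <= 1 -> (1 <= N)%nat ->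
  NoDup (exceptional_set r0 r1 N) /\
  INR (length (exceptional_set r0 r1 N)) <= (2 + 4 * INR (length special_points)) * rpow N r1 /\
  (forall n, (1 <= n)%nat -> INR n <= rpow N r0 -> In n (exceptional_set r0 r1 N)).
Proof.
  intros [Hr0pos Hr01] Hr0 HN.
  assert (HW : 1 <= rpow N r1) by (apply rpow_ge1; auto; lra).
  assert (HX : rpow N r0 <= rpow N r1) by (apply rpow_mono; auto).
  assert (Hnd : NoDup (exceptional_set r0 r1 N)) by apply NoDup_filter, seq_NoDup.
  split; [exact Hnd|split].
  - eapply Rle_trans.
    + apply (count_near_points _ (rpow N r0) (rpow N r1)
        (map (fun s => s * INR N) special_points)); auto; [left; apply rpow_pos|].
      intros n Hn. unfold exceptional_set in Hn. apply filter_In in Hn as [Hn Hcond].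
      apply in_seq in Hn.
      destruct (excluded_middle_informative _) as [[Hsmall|[s [Hs Hnear]]]|]; [| |discriminate].
      * left. split; [lia|auto].
      * right. exists (s * INR N). split; auto. apply (in_map (fun s => s * INR N)); auto.
    + rewrite length_map. pose proof (pos_INR (length special_points)). nra.
  - intros n Hn1 Hn. apply in_exceptional_set; auto.
    split; auto. apply INR_le. pose proof (rpow_le_N N r0 HN). lra.
Qed.

Lemma order_intervals_unit p ab : In ab (order_intervals p) -> 0 <= fst ab < snd ab /\ snd ab <= 1.
Proof.
  intros Hab. apply order_intervals_iff in Hab as [Hg _]. destruct ab as [s s'].
  apply gap_in_unit in Hg. simpl. lra.
Qed.

(* Distinct intervals (over all orderings) are disjoint: intersecting gaps
   coincide, hence carry the same ordering and the same position in it. *)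
Lemma order_intervals_disjoint p p' j j' :
  (j < length (order_intervals p))%nat -> (j' < length (order_intervals p'))%nat -> (p, j) <> (p', j') ->
  forall x : R,
    ~ (fst (nth j (order_intervals p) (0, 0)) < x < snd (nth j (order_intervals p) (0, 0)) /\
       fst (nth j' (order_intervals p') (0, 0)) < x < snd (nth j' (order_intervals p') (0, 0))).
Proof.
  intros Hj Hj' Hne x [Hx Hx'].
  pose proof (nth_In _ (0, 0) Hj) as Hin. pose proof (nth_In _ (0, 0) Hj') as Hin'.
  remember (nth j (order_intervals p) (0, 0)) as g eqn:Eg.
  remember (nth j' (order_intervals p') (0, 0)) as g' eqn:Eg'.
  apply order_intervals_iff in Hin as [Hg Hp]. apply order_intervals_iff in Hin' as [Hg' Hp'].
  assert (Hgg : g = g').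
  { apply gaps_iff in Hg as [A1 [A2 [_ N1]]]. apply gaps_iff in Hg' as [A3 [A4 [_ N2]]].
    destruct (gaps_meet_equal special_points (fst g) (snd g) (fst g') (snd g') x) as [E1 E2]; auto.
    rewrite (surjective_pairing g), (surjective_pairing g'), E1, E2; reflexivity. }
  assert (Hpp : p' = p) by congruence. rewrite Hpp in Eg', Hj'.
  assert (Hjj : j <> j') by (intros ->; apply Hne; rewrite Hpp; reflexivity).
  apply Hjj, (NoDup_nth (order_intervals p) (0, 0)); auto; [|congruence].
  apply NoDup_filter, NoDup_nodup.
Qed.

Lemma inI_in_gap r1 p N n : (1 <= N)%nat -> inI (order_intervals p) 1 r1 N n ->
  exists s s', In (s, s') (order_intervals p) /\
    s * INR N + rpow N r1 < INR n < s' * INR N - rpow N r1 /\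
    s < INR n / INR N < s'.
Proof.
  intros HN [[s s'] [Hin Hn]]. simpl in Hn. rewrite Rmult_1_l in Hn.
  exists s, s'. split; [auto|split; [auto|]].
  apply div_between; auto. pose proof (rpow_pos N r1). lra.
Qed.

Lemma I_disjoint r1 N p p' n : (1 <= N)%nat -> p <> p' ->
  ~ (inI (order_intervals p) 1 r1 N n /\ inI (order_intervals p') 1 r1 N n).
Proof.
  intros HN Hne [H1 H2].
  destruct (inI_in_gap r1 p N n HN H1) as [s1 [s1' [Hi1 [_ Hx1]]]].
  destruct (inI_in_gap r1 p' N n HN H2) as [s2 [s2' [Hi2 [_ Hx2]]]].
  apply order_intervals_iff in Hi1 as [Hg1 Hp1]. apply order_intervals_iff in Hi2 as [Hg2 Hp2].
  apply gaps_iff in Hg1 as [A1 [A2 [_ N1]]]. apply gaps_iff in Hg2 as [A3 [A4 [_ N2]]]. simpl in *.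
  destruct (gaps_meet_equal special_points s1 s1' s2 s2' (INR n / INR N)) as [E1 E2]; auto.
  subst. apply Hne. congruence.
Qed.

(* A non-exceptional n lies strictly between the largest special point below
   n/N and the smallest one above, at distance > N^r1 from both. *)
Lemma I_cover r0 r1 N n : (1 <= n <= N)%nat -> ~ In n (exceptional_set r0 r1 N) ->
  exists p, is_perm (length qs) p /\ inI (order_intervals p) 1 r1 N n.
Proof.
  intros Hn HnB.
  assert (HNpos : 0 < INR N) by (apply lt_0_INR; lia).
  assert (HnN : INR n <= INR N) by (apply le_INR; lia).
  assert (Hfar : forall s, In s special_points -> rpow N r1 < Rabs (INR n - s * INR N)).
  { intros s Hs. apply Rnot_le_lt. intros Hle. apply HnB, in_exceptional_set; eauto. }
  destruct (list_max_such_that special_points (fun z => z * INR N < INR n)) as [m [Hm [Pm Hmax]]].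
  { exists 0. split; [apply special_point_0|]. rewrite Rmult_0_l. apply lt_0_INR. lia. }
  destruct (list_min_such_that special_points (fun z => INR n < z * INR N)) as [m' [Hm' [Pm' Hmin]]].
  { exists 1. split; [apply special_point_1|]. specialize (Hfar 1 special_point_1).
    rewrite Rmult_1_l, Rabs_left1 in Hfar; pose proof (rpow_pos N r1); lra. }
  assert (Hgap : In (m, m') gaps).
  { apply gaps_iff. simpl. split; [auto|split; [auto|split]]; simpl.
    - apply Rmult_lt_reg_r with (INR N); lra.
    - intros z Hz Hbetween. pose proof (Hfar z Hz) as Hfz.
      destruct (Rtotal_order (z * INR N) (INR n)) as [Hl|[He|Hg]].
      + specialize (Hmax z Hz Hl). lra.
      + rewrite He, Rminus_diag, Rabs_R0 in Hfz. pose proof (rpow_pos N r1). lra.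
      + specialize (Hmin z Hz Hg). lra. }
  exists (gap_order (m, m')). split; [apply gap_order_spec; auto|].
  exists (m, m'). split; [apply order_intervals_iff; auto|]. simpl. rewrite Rmult_1_l.
  pose proof (Hfar m Hm) as F1. pose proof (Hfar m' Hm') as F2.
  rewrite Rabs_pos_eq in F1 by lra. rewrite Rabs_left1 in F2 by lra. lra.
Qed.

Lemma I_ordering r1 : sep_exponent <= r1 < 1 -> exists N0, forall N, (N0 <= N)%nat ->
  forall p n, is_perm (length qs) p -> inI (order_intervals p) 1 r1 N n ->
  forall i, (S i < length qs)%nat ->
    INR (beval (nth (nth i p 0%nat) qs nil) n N) + sqrt (INR N)
    <= INR (beval (nth (nth (S i) p 0%nat) qs nil) n N).
Proof.
  intros Hr1. destruct (all_pairs_separated r1 Hr1) as [N0 HN0].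
  exists (Nat.max N0 1). intros N HN p n Hp HnI i Hi.
  assert (HN1 : (1 <= N)%nat) by lia.
  destruct (inI_in_gap r1 p N n HN1 HnI) as [s [s' [Hin [Hn Hx]]]].
  apply order_intervals_iff in Hin as [Hg Hord].
  destruct (gap_order_spec _ Hg) as [_ Horders]. rewrite Hord in Horders.
  specialize (Horders i Hi). simpl in Horders.
  destruct (perm_adjacent _ p i Hp Hi) as [Ha [Hb Hab]].
  pose proof (gap_in_unit s s' Hg) as Hunit.
  assert (HnN : (n <= N)%nat).
  { apply INR_le. pose proof (rpow_pos N r1). pose proof (pos_INR N).
    assert (s' * INR N <= INR N) by nra. lra. }
  destruct (HN0 _ Ha N ltac:(lia) _ Hb Hab n HnN) as [Hsep _].
  - intros r Hr. apply (gap_far_from_special r1 s s'); auto.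
    apply (special_point_root (nth i p 0%nat) (nth (S i) p 0%nat)); auto.
  - assert (0 < horner (tf_poly (top_form (nth i p 0%nat) (nth (S i) p 0%nat))) (INR n / INR N))
      by (apply (top_form_sign_on_gap _ _ s s' ((s + s') / 2)); auto; lra).
    specialize (Hsep H). lra.
Qed.

End Construction.

Theorem mainTheorem12 (qs : list bpoly) (r0 : R) :
  (* standing assumptions on q_1, ..., q_l (0-indexed: q_i = nth i qs []) *)
  (forall i, (i < length qs)%nat -> ~ depends_only_on_N (nth i qs nil)) ->
  (forall i, (S i < length qs)%nat -> (bdeg (nth i qs nil) <= bdeg (nth (S i) qs nil))%nat) ->
  (forall i j, (i < length qs)%nat -> (j < length qs)%nat -> i <> j ->
      ~ diff_constant (nth i qs nil) (nth j qs nil)) ->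
  (forall i, (i < length qs)%nat -> bdeg (nth i qs nil) = 1%nat ->
      bcoef (nth i qs nil) 0 0 = 0%nat) ->
  (* hypothesis on r0 *)
  0 < r0 < 1 ->
  (forall i j, (i < length qs)%nat -> (j < length qs)%nat ->
      (bdeg (nth j qs nil) < bdeg (nth i qs nil))%nat ->
      exists N0 : nat, forall N n m : nat, (N0 <= N)%nat ->
        rpow N r0 <= INR n -> (n <= N)%nat ->
        rpow N r0 <= INR m -> (m <= N)%nat ->
        INR (beval (nth i qs nil) n N) - INR (beval (nth j qs nil) m N) >= INR N) ->
  exists (r1 c A B : R) (Bs : nat -> list nat) (iv : list nat -> list (R * R)),
    0 < r1 < 1 /\ 0 < c /\ 0 < A /\ 0 < B /\
    (* the exceptional sets B_N *)
    (forall N : nat, (1 <= N)%nat ->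
       NoDup (Bs N) /\
       INR (length (Bs N)) <= A * rpow N r1 /\
       (forall n : nat, (1 <= n)%nat -> INR n <= rpow N r0 -> In n (Bs N))) /\
    (* the intervals (a_{j,eps}, b_{j,eps}) *)
    (forall p, is_perm (length qs) p ->
       forall ab, In ab (iv p) -> 0 <= fst ab < snd ab /\ snd ab <= 1) /\
    (forall p p' j j', is_perm (length qs) p -> is_perm (length qs) p' ->
       (j < length (iv p))%nat -> (j' < length (iv p'))%nat ->
       (p, j) <> (p', j') ->
       forall x : R,
         ~ (fst (nth j (iv p) (0, 0)) < x < snd (nth j (iv p) (0, 0)) /\
            fst (nth j' (iv p') (0, 0)) < x < snd (nth j' (iv p') (0, 0)))) /\
    (* the sets I_eps(N) are pairwise disjoint and cover [1,N] \ B_N *)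
    (forall N : nat, (1 <= N)%nat ->
       (forall p p' n, is_perm (length qs) p -> is_perm (length qs) p' -> p <> p' ->
          ~ (inI (iv p) B r1 N n /\ inI (iv p') B r1 N n)) /\
       (forall n : nat, (1 <= n <= N)%nat -> ~ In n (Bs N) ->
          exists p, is_perm (length qs) p /\ inI (iv p) B r1 N n)) /\
    (* ordering of the q's on I_eps(N) *)
    (exists N0 : nat, forall N : nat, (N0 <= N)%nat ->
       forall p n, is_perm (length qs) p -> inI (iv p) B r1 N n -> rpow N r0 <= INR n ->
       forall i, (S i < length qs)%nat ->
         let qa := nth (nth i p 0%nat) qs nil in
         let qb := nth (nth (S i) p 0%nat) qs nil in
         (beval qa n N < beval qb n N)%nat /\
         (bdeg qa = bdeg qb -> (1 < bdeg qa)%nat ->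
            INR (beval qb n N) >= INR (beval qa n N) + c * sqrt (INR N))).
Proof.
  intros _ _ Hnc _ Hr0 _.
  set (r1 := Rmax r0 (sep_exponent qs)).
  assert (Hr1 : sep_exponent qs <= r1 < 1 /\ r0 <= r1).
  { pose proof (sep_exponent_props qs (sep_exponent qs) (Rle_refl _)) as [Hsep _].
    unfold r1. split; [split|]; [apply Rmax_r|apply Rmax_lub_lt; lra|apply Rmax_l]. }
  destruct (I_ordering qs Hnc r1) as [N0 Hord]; [tauto|].
  pose proof (pos_INR (length (special_points qs))).
  exists r1, 1, (2 + 4 * INR (length (special_points qs))), 1,
    (exceptional_set qs r0 r1), (order_intervals qs).
  split; [lra|split; [lra|split; [lra|split; [lra|]]]].
  split; [intros N HN; apply exceptional_set_props; auto; lra|].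
  split; [intros p _; apply order_intervals_unit; auto|].
  split; [intros p p' j j' _ _; apply order_intervals_disjoint; auto|].
  split; [intros N HN; split; [intros p p' n _ _; apply I_disjoint; auto|apply I_cover; auto]|].
  exists (Nat.max N0 1). intros N HN p n Hp HnI _ i Hi qa qb.
  specialize (Hord N ltac:(lia) p n Hp HnI i Hi). subst qa qb.
  assert (0 < sqrt (INR N)) by (apply sqrt_lt_R0, lt_0_INR; lia).
  split; [apply INR_lt; lra|intros _ _; lra].
Qed.
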